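(* In the multiple-choice secretary problem with predictions with capacity $k$, run the Learned Kleinberg algorithm with any threshold $\theta\ge0$, and assume $1\le |M|\le\sqrt{k}\ln k$. Let $t_M=\min_{i\in M}t_i$ be the first arrival time of a candidate in $M$, let $S=\{i\in\hat S: t_i<t_M\}$ be the set of candidates hired before time $t_M$, and define $k'=k-|S|-1$. Then $\Pr(k'\ge\sqrt{k}\ln k)\ge 1-\frac{3\ln k}{\sqrt{k}}$.
   Context: Multiple-choice secretary problem with predictions (continuous-time model): there are $n$ candidates $N=\{1,\dots,n\}$, each with actual value $v(i)>0$ and predicted value $\hat v(i)\ge 0$ (known in advance), and a capacity $k$ (positive integer). Each candidate $i$ independently receives an arrival time $t_i$ uniform on $[0,1]$. For $S\subseteq N$, $\hat v(S)=\sum_{i\in S}\hat v(i)$. $M=\{i\in N : |1-\hat v(i)/v(i)|>\theta\}$. The Learned Kleinberg algorithm fixes $\hat S\in\arg\max_{S\subseteq N,|S|\le k}\hat v(S)$, hires the candidates of $\hat S$ as they arrive until the first candidate of $M$ arrives (at time $t_M$), then hires that candidate and runs Kleinberg's multiple-choice secretary algorithm with the remaining capacity $k'=k-|S|-1$ on the later-arriving candidates. The probability is over the arrival times. *)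

From HB Require Import structures.
From mathcomp Require Import all_boot all_order all_algebra.
From mathcomp Require Import all_classical all_reals all_analysis.
Set Implicit Arguments. Unset Strict Implicit. Unset Printing Implicit Defensive.
Import Order.TTheory GRing.Theory Num.Theory.
Local Open Scope classical_set_scope.
Local Open Scope ring_scope.

Definition vsum (R : realType) (n : nat) (vh : 'I_n -> R) (S : {set 'I_n}) : R :=
  \sum_(i in S) vh i.

Definition mispredicted (R : realType) (n : nat) (v vh : 'I_n -> R) (theta : R)
  : {set 'I_n} := [set i | theta < `|1 - vh i / v i|].

Definition is_pred_opt (R : realType) (n k : nat) (vh : 'I_n -> R) (Sh : {set 'I_n}) :=
  (#|Sh| <= k)%N /\ forall S : {set 'I_n}, (#|S| <= k)%N -> vsum vh S <= vsum vh Sh.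

Definition uniform01_rv d (T : measurableType d) (R : realType)
  (P : probability T R) (X : T -> R) :=
  measurable_fun setT X /\
  forall A : set R, measurable A ->
    P (X @^-1` A) = lebesgue_measure (A `&` `[0%R, 1%R]).

Definition mutually_independent d (T : measurableType d) (R : realType) (n : nat)
  (P : probability T R) (t : 'I_n -> T -> R) :=
  forall (J : {set 'I_n}) (A : 'I_n -> set R), (forall i, measurable (A i)) ->
    P [set w | forall i, i \in J -> A i (t i w)] =
    (\prod_(i in J) P (t i @^-1` A i))%E.

Definition hired_before (R : realType) (T : Type) (n : nat) (t : 'I_n -> T -> R)
  (Sh M : {set 'I_n}) (w : T) : {set 'I_n} :=
  [set i in Sh | [forall j in M, t i w < t j w]].

From HB Require Import structures.
From mathcomp Require Import all_boot all_order all_algebra.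
From mathcomp Require Import all_classical all_reals all_analysis.
From mathcomp Require Import measurable_realfun ring lra.
Set Implicit Arguments. Unset Strict Implicit. Unset Printing Implicit Defensive.
Import Order.TTheory GRing.Theory Num.Theory.
Local Open Scope classical_set_scope.
Local Open Scope ring_scope.

(* Every candidate hired before t_M lies in Sh \ M and arrives before t_i0 for
   any fixed i0 in M.  Put s = sqrt k, l = ln k and N = |Sh \ M|, and call a
   candidate late when it arrives after c = 1 - p, where p = (1 + 3/2 s l) / N.
   If t_i0 <= c, the late candidates of Sh \ M are not hired; their number is
   binomial with mean 1 + 3/2 s l and variance at most that, so by Chebyshev it
   is at least 1 + s l except with probability (1 + 3/2 s l) / (s l / 2)^2.
   Hence the failure probability is at most p + (1 + 3/2 s l) / (s l / 2)^2,
   which is below 3 l / s as soon as s > 3 l (this forces l >= 4); when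
   s <= 3 l the bound is trivial, and when N <= k - 1 - s l there is nothing
   to prove. *)

Section LogBounds.
Variable R : realType.

Lemma expR1_le3 : expR 1 <= 3 :> R.
Proof.
have -> : (1 : R) = 8%:R * (1 / 8) by field.
rewrite expRM_natl.
have e8_gt0 := expR_gt0 (1 / 8 : R).
have e8_le : expR (1 / 8 : R) <= 8 / 7.
  have inv : expR (1 / 8 : R) * expR (- (1 / 8)) = 1.
    by rewrite -expRD subrr expR0.
  have := expR_ge1Dx (- (1 / 8) : R); have := expR_gt0 (- (1 / 8) : R).
  nra.
apply: le_trans (lerXn2r 8 _ _ e8_le) _; rewrite ?nnegrE ?exprS ?expr0; lra.
Qed.

Lemma ln_ge_nat_of_pow3 (m : nat) (x : R) : 3 ^+ m <= x -> m%:R <= ln x.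
Proof.
move=> le_x; have pow3_gt0 : 0 < (3 : R) ^+ m by rewrite exprn_gt0.
have ln3_ge1 : 1 <= ln (3 : R).
  by rewrite -[leLHS](expRK 1) ler_ln ?expR1_le3 // posrE.
apply: le_trans (_ : ln (3 ^+ m) <= ln x).
  by rewrite lnXn // -[ln 3 *+ m]mulr_natr; apply: ler_peMl.
by rewrite ler_ln ?posrE // (lt_le_trans pow3_gt0).
Qed.

Lemma ln2_ge_half : 1 / 2 <= ln (2 : R).
Proof.
have e2_gt0 := expR_gt0 (1 / 2 : R).
have e2_sq : expR (1 / 2 : R) ^+ 2 <= 3.
  by rewrite -expRM_natl (_ : 2%:R * (1 / 2) = 1 :> R) ?expR1_le3 //; field.
rewrite -(@ler_expR R) lnK ?posrE //; rewrite expr2 in e2_sq; nra.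
Qed.

Lemma sqrt_le_3ln (k : nat) : (2 <= k < 81)%N ->
  Num.sqrt (k%:R : R) <= 3 * ln k%:R.
Proof.
move=> /andP[k_ge2 k_lt81].
have l_ge0 : 0 <= ln (k%:R : R) by rewrite ln_ge0 // ler1n ltnW.
suff le_sq : (k%:R : R) <= (3 * ln k%:R) ^+ 2.
  rewrite -(ger0_norm (_ : 0 <= 3 * ln (k%:R : R))); last lra.
  by rewrite -sqrtr_sqr ler_wsqrtr.
have from_pow3 m : (3 ^ m <= k)%N -> (k <= 9 * m ^ 2)%N ->
    (k%:R : R) <= (3 * ln k%:R) ^+ 2.
  move=> lo hi; have := ln_ge_nat_of_pow3 (m := m) (x := k%:R).
  rewrite -natrX ler_nat => /(_ lo) m_le.
  apply: le_trans (_ : (3 * m%:R) ^+ 2 <= _).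
    by rewrite exprMn -!natrX -natrM ler_nat.
  by rewrite lerXn2r ?nnegrE ?mulr_ge0 ?ler_pM2l //; lra.
have [k2|k_ge3] := leqP k 2.
  have -> : k = 2%N by apply/eqP; rewrite eqn_leq k2.
  have ln2_ge := ln2_ge_half; rewrite expr2; nra.
have [k_lt9|k_ge9] := ltnP k 9; first exact: (from_pow3 1%N) (ltnW k_lt9).
have [k_lt27|k_ge27] := ltnP k 27.
  by apply: (from_pow3 2%N) => //; apply: ltnW (leq_trans k_lt27 _).
exact: (from_pow3 3%N) (ltnW k_lt81).
Qed.

Lemma ln_ge4_of_3ln_lt_sqrt (k : nat) : (2 <= k)%N ->
  3 * ln (k%:R : R) < Num.sqrt k%:R -> 4 <= ln (k%:R : R).
Proof.
move=> k_ge2 lt_sqrt; have [k_lt81|k_ge81] := ltnP k 81.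
  by move: lt_sqrt; rewrite ltNge sqrt_le_3ln // k_ge2.
by apply: ln_ge_nat_of_pow3; rewrite -natrX ler_nat.
Qed.

End LogBounds.

(* With s = sqrt k and l = ln k, 1 + 3/2 s l is the expected number of late
   candidates and s l / 2 the deviation from it allowed in Chebyshev's bound. *)
Section Budget.
Variable R : realFieldType.
Implicit Types s l N : R.

Lemma budget_le_card s l N : 4 <= l -> 3 * l < s ->
  s ^+ 2 - 1 - s * l < N -> 1 + 3 / 2 * (s * l) <= N.
Proof.
move=> l_ge4 s_gt N_gt; have ls_lt_ss : 3 * l * s < s * s by nra.
rewrite expr2 in N_gt; nra.
Qed.

Lemma budget_div_card_le s l N : 4 <= l -> 3 * l < s ->
  s ^+ 2 - 1 - s * l < N -> (1 + 3 / 2 * (s * l)) / N <= 5 / 2 * (l / s).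
Proof.
move=> l_ge4 s_gt N_gt; have mu_le := budget_le_card l_ge4 s_gt N_gt.
have sl_ge0 : 0 <= s * l by nra.
have N_gt0 : 0 < N by lra.
have key : 2 * s * (1 + 3 / 2 * (s * l)) <= 5 * l * N.
  have lls : 3 * l * (l * s) < s * (l * s) by rewrite ltr_pM2r //; nra.
  rewrite expr2 in N_gt; nra.
rewrite -subr_ge0.
have -> : 5 / 2 * (l / s) - (1 + 3 / 2 * (s * l)) / N =
    (5 * l * N - 2 * s * (1 + 3 / 2 * (s * l))) / (2 * s * N).
  by field; lra.
by apply: divr_ge0; nra.
Qed.

Lemma budget_div_sq_le s l : 4 <= l -> 3 * l < s ->
  (1 + 3 / 2 * (s * l)) / (s * l / 2) ^+ 2 <= 1 / 2 * (l / s).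
Proof.
move=> l_ge4 s_gt; have s_gt0 : 0 < s by lra.
have sl_ge48 : 48 <= s * l.
  have h : 0 <= (s - 12) * (l - 4) by apply: mulr_ge0; lra.
  nra.
have key : 8 * (1 + 3 / 2 * (s * l)) <= s * l * l ^+ 2.
  have l_sq : 16 <= l ^+ 2 by rewrite expr2; nra.
  have h : 0 <= s * l * (l ^+ 2 - 16) by apply: mulr_ge0; lra.
  nra.
rewrite -subr_ge0.
have -> : 1 / 2 * (l / s) - (1 + 3 / 2 * (s * l)) / (s * l / 2) ^+ 2 =
    (s * l * l ^+ 2 - 8 * (1 + 3 / 2 * (s * l))) / (2 * (s * l) ^+ 2).
  by field; lra.
by apply: divr_ge0; nra.
Qed.

Lemma budget_tail_sum_le s l N : 4 <= l -> 3 * l < s ->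
    s ^+ 2 - 1 - s * l < N ->
  (1 + 3 / 2 * (s * l)) / N + (1 + 3 / 2 * (s * l)) / (s * l / 2) ^+ 2 <= 3 * l / s.
Proof.
move=> l_ge4 s_gt N_gt; have first := budget_div_card_le l_ge4 s_gt N_gt.
have second := budget_div_sq_le l_ge4 s_gt.
rewrite -mulrA; lra.
Qed.

End Budget.

Lemma card_setI_sum (R : nzSemiRingType) (I : finType) (A H : {set I}) :
  #|A :&: H|%:R = \sum_(i in A) ((i \in H)%:R : R).
Proof.
rewrite -sum1_card natr_sum big_mkcond [RHS]big_mkcond /=.
by apply: eq_bigr => i _; rewrite inE; case: (i \in A); case: (i \in H).
Qed.

Lemma sumr_mul_indicator (R : nzSemiRingType) (I : finType) (P : pred I) (F : I -> R) :
  \sum_i F i * (P i)%:R = \sum_(i | P i) F i.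
Proof. by rewrite [RHS]big_mkcond; apply: eq_bigr => i _; rewrite mulr_natr mulrb. Qed.

Section RandomSubsetMoments.
Variables (R : realFieldType) (I : finType) (A : {set I}).
Variables (pr : {set I} -> R) (p : R).
Hypothesis pr_ge0 : forall H, 0 <= pr H.
Hypothesis pr_sum1 : \sum_H pr H = 1.
Hypothesis pr_mem : forall i, i \in A -> \sum_(H : {set I} | i \in H) pr H = p.
Hypothesis pr_mem2 : forall i j, i \in A -> j \in A -> i != j ->
  \sum_(H : {set I} | (i \in H) && (j \in H)) pr H = p ^+ 2.

Lemma sum_pr_mem2 i j : i \in A -> j \in A ->
  \sum_H pr H * ((i \in H) && (j \in H))%:R = p ^+ 2 + (i == j)%:R * (p - p ^+ 2).
Proof.
move=> iA jA; rewrite sumr_mul_indicator.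
have [<-|ij] := eqVneq i j; last by rewrite pr_mem2 // mul0r addr0.
by under eq_bigl do rewrite andbb; rewrite pr_mem // mul1r addrC subrK.
Qed.

Lemma mean_card_setI : \sum_H pr H * #|A :&: H|%:R = #|A|%:R * p.
Proof.
under eq_bigr do rewrite card_setI_sum mulr_sumr.
rewrite exchange_big /= (eq_bigr (fun=> p)) ?sumr_const ?mulr_natl // => i iA.
by rewrite sumr_mul_indicator pr_mem.
Qed.

Lemma second_moment_card_setI :
  \sum_H pr H * #|A :&: H|%:R ^+ 2 = (#|A|%:R * p) ^+ 2 + #|A|%:R * (p - p ^+ 2).
Proof.
have expand H : pr H * #|A :&: H|%:R ^+ 2 =
    \sum_(i in A) \sum_(j in A) pr H * ((i \in H) && (j \in H))%:R.
  rewrite card_setI_sum expr2 mulr_suml mulr_sumr; apply: eq_bigr => i _.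
  by rewrite !mulr_sumr; apply: eq_bigr => j _; rewrite -natrM mulnb.
rewrite (eq_bigr _ (fun H _ => expand H)) exchange_big /=.
under eq_bigr do rewrite exchange_big /=.
rewrite (eq_bigr (fun _ => #|A|%:R * p ^+ 2 + (p - p ^+ 2))); last first.
  move=> i iA; rewrite (eq_bigr _ (fun j jA => sum_pr_mem2 iA jA)) big_split /=.
  rewrite sumr_const mulr_natl; congr (_ + _).
  rewrite (bigD1 i) //= eqxx mul1r big1 ?addr0 // => j /andP[_ /negbTE].
  by rewrite eq_sym => ->; rewrite mul0r.
by rewrite sumr_const -mulr_natl; ring.
Qed.

Lemma variance_card_setI :
  \sum_H pr H * (#|A :&: H|%:R - #|A|%:R * p) ^+ 2 = #|A|%:R * (p - p ^+ 2).
Proof.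
have expand H : pr H * (#|A :&: H|%:R - #|A|%:R * p) ^+ 2 =
    pr H * #|A :&: H|%:R ^+ 2 - 2 * (#|A|%:R * p) * (pr H * #|A :&: H|%:R)
    + (#|A|%:R * p) ^+ 2 * pr H.
  by ring.
rewrite (eq_bigr _ (fun H _ => expand H)) big_split sumrB /= -!mulr_sumr.
by rewrite second_moment_card_setI mean_card_setI pr_sum1; ring.
Qed.

Lemma card_setI_lower_tail b : 0 < b ->
  \sum_(H | #|A :&: H|%:R <= #|A|%:R * p - b) pr H <= #|A|%:R * (p - p ^+ 2) / b ^+ 2.
Proof.
move=> b_gt0; rewrite ler_pdivlMr ?exprn_gt0 // -variance_card_setI mulr_suml.
rewrite [leRHS](bigID (fun H => #|A :&: H|%:R <= #|A|%:R * p - b)) /=.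
apply: ler_wpDr; first by apply: sumr_ge0 => H _; rewrite mulr_ge0 ?sqr_ge0.
apply: ler_sum => H low; apply: ler_wpM2l; first exact: pr_ge0.
rewrite !expr2; nra.
Qed.

End RandomSubsetMoments.

Section RealRandomVariables.
Variables (R : realType) (d : measure_display) (T : measurableType d).
Variable P : probability T R.

Lemma measurable_lt_fun (X Y : T -> R) :
  measurable_fun setT X -> measurable_fun setT Y -> measurable [set w | X w < Y w].
Proof.
move=> mX mY; rewrite -[X in measurable X]setTI.
exact: (measurable_fun_ltr mX mY measurableT).
Qed.

Lemma uniform01_gt (X : T -> R) (c : R) : uniform01_rv P X -> 0 <= c < 1 ->
  P [set w | c < X w] = (1 - c)%:E.
Proof.
case=> _ unifX /andP[c_ge0 c_lt1].
rewrite -preimage_itvoy unifX; last exact: measurable_itv.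
have -> : `]c, +oo[ `&` `[0, 1] = [set` `]c, 1]] :> set R.
  apply/seteqP; split => x /=; rewrite !in_itv /= ?andbT; first by case=> -> /andP[].
  by move=> /andP[cx ->]; split => //; rewrite (le_trans c_ge0) ?ltW.
by rewrite lebesgue_measure_itv /= lte_fin c_lt1 EFinB.
Qed.

End RealRandomVariables.

Section RandomFiniteSet.
Variables (R : realType) (d : measure_display) (T : measurableType d).
Variables (P : probability T R) (I : finType) (f : T -> {set I}).
Hypothesis measurable_mem : forall i, measurable [set w | i \in f w].

Lemma measurable_randset_eq H : measurable [set w | f w = H].
Proof.
have -> : [set w | f w = H] = \bigcap_(i in [set: I]) [set w | (i \in f w) = (i \in H)].
  apply/seteqP; split => w /= fwH; last by apply/setP => i; apply: fwH.
  by move=> i _ /=; rewrite fwH.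
apply: fin_bigcap_measurable => [|i _]; first exact: finite_finset.
case: (i \in H); first exact: measurable_mem.
rewrite (_ : [set w | _] = ~` [set w | i \in f w]); first exact/measurableC.
by apply/seteqP; split => w /=; [move=> -> | move/negP/negbTE].
Qed.

Lemma randset_pred_bigcup (Q : pred {set I}) :
  [set w | Q (f w)] = \bigcup_(H in [set H | Q H]) [set w | f w = H].
Proof. by apply/seteqP; split => [w /= Qfw|w [H QH /= ->]] //; exists (f w). Qed.

Lemma measurable_randset_pred (Q : pred {set I}) : measurable [set w | Q (f w)].
Proof.
rewrite randset_pred_bigcup; apply: fin_bigcup_measurable => [|H _].
  exact: finite_finset.
exact: measurable_randset_eq.
Qed.

Lemma probability_randset_pred (Q : pred {set I}) :
  fine (P [set w | Q (f w)]) = \sum_(H | Q H) fine (P [set w | f w = H]).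
Proof.
rewrite randset_pred_bigcup measure_fin_bigcup; first last.
- by move=> H _; exact: measurable_randset_eq.
- by move=> H K _ _ [w [/= <- <-]].
- exact: finite_finset.
have -> : \sum_(H | Q H) fine (P [set w | f w = H]) =
    fine (\sum_(H | Q H) (fine (P [set w | f w = H]))%:E) by rewrite sumEFin.
rewrite [in RHS]bigfs ?index_enum_uniq //; last by move=> H _; rewrite mem_index_enum.
congr fine; apply: eq_fsbigr => H _.
by rewrite fineK // fin_num_measure //; exact: measurable_randset_eq.
Qed.

End RandomFiniteSet.

Section ArrivalTimes.
Variables (R : realType) (d : measure_display) (T : measurableType d).
Variables (P : probability T R) (n : nat) (t : 'I_n -> T -> R).
Hypothesis unif : forall i, uniform01_rv P (t i).
Hypothesis indep : mutually_independent P t.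

Let measurable_t i : measurable_fun setT (t i). Proof. by case: (unif i). Qed.

Lemma measurable_late_mem (c : R) i : measurable [set w | i \in [set j | c < t j w]%SET].
Proof.
under eq_set do rewrite inE.
exact: measurable_lt_fun (measurable_cst _) (measurable_t i).
Qed.

Lemma card_late_lower_tail (A : {set 'I_n}) (c b : R) : 0 <= c < 1 -> 0 < b ->
  fine (P [set w | #|A :&: [set i | c < t i w]|%:R <= #|A|%:R * (1 - c) - b]) <=
    #|A|%:R * ((1 - c) - (1 - c) ^+ 2) / b ^+ 2.
Proof.
move=> c01 b_gt0; pose late w := [set i | c < t i w]%SET.
have mlate : forall i, measurable [set w | i \in late w] := measurable_late_mem c.
have late_gt i : P [set w | c < t i w] = (1 - c)%:E by exact: uniform01_gt.
rewrite (probability_randset_pred P mlate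
  (fun H => #|A :&: H|%:R <= #|A|%:R * (1 - c) - b)).
apply: card_setI_lower_tail => //.
- by move=> H; apply/fine_ge0/measure_ge0.
- have /= <- := probability_randset_pred P mlate xpredT.
  by rewrite (_ : [set w | _] = setT) ?probability_setT //; apply/seteqP.
- move=> i _; have /= <- := probability_randset_pred P mlate (fun H => i \in H).
  by under eq_set do rewrite inE; rewrite late_gt.
move=> i j _ _ ij.
have /= <- := probability_randset_pred P mlate (fun H => (i \in H) && (j \in H)).
have -> : [set w | (i \in late w) && (j \in late w)] =
    [set w | forall x, x \in [set i; j]%SET -> `]c, +oo[%classic (t x w)].
  apply/seteqP; split => w /=; rewrite !finset.in_set.
    move=> /andP[ci cj] x; rewrite finset.in_setU1 finset.in_set1 in_itv /= andbT.
    by case/orP => /eqP ->.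
  move=> late2; have {}late2 x : x \in [set i; j]%SET -> c < t x w.
    by move=> /late2; rewrite in_itv /= andbT.
  by rewrite !late2 // !inE eqxx ?orbT.
rewrite (indep [set i; j]%SET (fun=> measurable_itv `]c, +oo[)).
rewrite big_setU1 ?big_set1 /= ?finset.in_set1 //.
by rewrite !preimage_itvoy !late_gt -EFinM expr2.
Qed.

Variables (k : nat) (Sh M : {set 'I_n}).

Lemma hired_before_subset w : hired_before t Sh M w \subset Sh :\: M.
Proof.
apply/fintype.subsetP => i; rewrite !inE => /andP[iSh /forallP lt_M].
by rewrite iSh andbT; apply/negP => iM; have := implyP (lt_M i) iM; rewrite ltxx.
Qed.

Lemma measurable_hired_mem i : measurable [set w | i \in hired_before t Sh M w].
Proof.
rewrite /hired_before; under eq_set do rewrite inE.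
case: (i \in Sh) => /=; last first.
  by rewrite (_ : [set _ | false] = set0) //; apply/seteqP; split => w.
have -> : [set w | [forall j in M, t i w < t j w]] =
    \bigcap_(j in [set j | j \in M]) [set w | t i w < t j w].
  apply/seteqP; split => w /=; first by move/forallP => lt_M j; apply/implyP/lt_M.
  by move=> lt_M; apply/forallP => j; apply/implyP/lt_M.
apply: fin_bigcap_measurable => [|j _]; first exact: finite_finset.
exact: measurable_lt_fun.
Qed.

Lemma card_hired_before_late (c : R) i0 w : i0 \in M -> t i0 w <= c ->
  (#|hired_before t Sh M w| + #|(Sh :\: M) :&: [set i | (c < t i w)%R]| <= #|Sh :\: M|)%N.
Proof.
move=> i0M t0_le; rewrite -(cardsID [set i | c < t i w] (Sh :\: M)) addnC leq_add2l.
apply/subset_leq_card/fintype.subsetP => i hi.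
rewrite finset.in_setD (fintype.subsetP (hired_before_subset w)) // andbT inE -leNgt.
move: hi; rewrite inE => /andP[_ /forallP/(_ i0)]; rewrite i0M /= => lt0.
exact/ltW/(lt_le_trans lt0 t0_le).
Qed.

Lemma hired_before_sure (x : R) : #|Sh :\: M|%:R <= k%:R - 1 - x ->
  P [set w | x <= k%:R - #|hired_before t Sh M w|%:R - 1] = 1%E.
Proof.
move=> small; rewrite (_ : [set w | _] = setT) ?probability_setT //.
apply/seteqP; split => // w _ /=.
have := subset_leq_card (hired_before_subset w); rewrite -(ler_nat R) => le_card.
lra.
Qed.

Lemma hired_before_fail_sub (i0 : 'I_n) (x c b : R) :
    (#|Sh| <= k)%N -> i0 \in M -> x + 1 <= #|Sh :\: M|%:R * (1 - c) - b ->
  ~` [set w | x <= k%:R - #|hired_before t Sh M w|%:R - 1] `<=`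
    [set w | c < t i0 w] `|`
    [set w | #|(Sh :\: M) :&: [set i | c < t i w]|%:R <= #|Sh :\: M|%:R * (1 - c) - b].
Proof.
move=> Sh_le_k i0M budget w /= bad; have [|t0_le] := ltP c (t i0 w); [by left | right].
rewrite leNgt; apply/negP => many; apply: bad.
have := card_hired_before_late i0M t0_le; rewrite -(ler_nat R) natrD => cards.
have := leq_trans (subset_leq_card (subsetDl Sh M)) Sh_le_k.
rewrite -(ler_nat R) => card_le_k.
lra.
Qed.

Lemma hired_before_tail (i0 : 'I_n) (x p b : R) :
    (#|Sh| <= k)%N -> i0 \in M -> 0 < p <= 1 -> 0 < b ->
    x + 1 <= #|Sh :\: M|%:R * p - b ->
  ((1 - (p + #|Sh :\: M|%:R * p / b ^+ 2))%:E <=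
    P [set w | (x <= k%:R - #|hired_before t Sh M w|%:R - 1)%R])%E.
Proof.
move=> Sh_le_k i0M /andP[p_gt0 p_le1] b_gt0 budget.
set A := Sh :\: M in budget *; set c := 1 - p.
have c01 : 0 <= c < 1 by apply/andP; split; rewrite /c; lra.
have one_sub_c : 1 - c = p by rewrite /c subKr.
set good := [set w | _ <= _].
set late0 := [set w | c < t i0 w].
set few := [set w | #|A :&: [set i | c < t i w]|%:R <= #|A|%:R * (1 - c) - b].
have mgood : measurable good.
  exact: (measurable_randset_pred measurable_hired_mem
    (fun H => x <= k%:R - #|H|%:R - 1)).
have mlate0 : measurable late0 by exact: measurable_lt_fun (measurable_cst _) _.
have mfew : measurable few.
  exact: (measurable_randset_pred (measurable_late_mem c)
    (fun H => #|A :&: H|%:R <= #|A|%:R * (1 - c) - b)).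
have bad_sub : ~` good `<=` late0 `|` few.
  by apply: hired_before_fail_sub; rewrite ?one_sub_c.
have P_late0 : P late0 = p%:E by rewrite /late0 uniform01_gt // one_sub_c.
have P_few : fine (P few) <= #|A|%:R * p / b ^+ 2.
  apply: le_trans (card_late_lower_tail A c01 b_gt0) _.
  rewrite one_sub_c; apply: ler_wpM2r; first by rewrite invr_ge0 exprn_ge0 ?ltW.
  by apply: ler_wpM2l => //; rewrite gerBl sqr_ge0.
have bad_le : (P (~` good) <= P late0 + P few)%E.
  apply: le_trans (measureU2 _ mlate0 mfew); apply: le_measure => //.
  - by rewrite inE; exact: measurableC.
  - by rewrite inE; exact: measurableU.
move: bad_le; rewrite probability_setC // P_late0.
rewrite -(fineK (fin_num_measure _ _ mfew)) -(fineK (fin_num_measure _ _ mgood)).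
by rewrite -!EFinD !lee_fin; lra.
Qed.

Lemma hired_before_sqrt_ln_bound (i0 : 'I_n) (s l : R) :
    (#|Sh| <= k)%N -> i0 \in M -> s ^+ 2 = k%:R -> 4 <= l -> 3 * l < s ->
  ((1 - 3 * l / s)%:E <=
    P [set w | (s * l <= k%:R - #|hired_before t Sh M w|%:R - 1)%R])%E.
Proof.
move=> Sh_le_k i0M s_sq l_ge4 s_gt; pose N : R := #|Sh :\: M|%:R.
have [N_le|N_gt] := lerP N (k%:R - 1 - s * l).
  by rewrite hired_before_sure // lee_fin gerBl; apply: divr_ge0; lra.
rewrite -s_sq in N_gt; set mu := 1 + 3 / 2 * (s * l).
have mu_le_N : mu <= N := budget_le_card l_ge4 s_gt N_gt.
have sl_gt0 : 0 < s * l by nra.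
have mu_gt0 : 0 < mu by rewrite /mu; lra.
have N_gt0 : 0 < N by lra.
have N_mu : N * (mu / N) = mu by rewrite mulrC divfK ?gt_eqF.
have p_range : 0 < mu / N <= 1 by rewrite divr_gt0 // ler_pdivrMr // mul1r.
have b_gt0 : 0 < s * l / 2 by rewrite divr_gt0.
have budget : s * l + 1 <= N * (mu / N) - s * l / 2 by rewrite N_mu /mu; lra.
apply: le_trans (hired_before_tail Sh_le_k i0M p_range b_gt0 budget).
by rewrite N_mu lee_fin lerB // budget_tail_sum_le.
Qed.

End ArrivalTimes.

Theorem lemma3 (R : realType) (d : measure_display) (T : measurableType d)
  (P : probability T R) (n k : nat) (v vh : 'I_n -> R) (theta : R)
  (Sh : {set 'I_n}) (t : 'I_n -> T -> R) :
  (0 < k)%N ->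
  (forall i, 0 < v i) -> (forall i, 0 <= vh i) -> 0 <= theta ->
  is_pred_opt k vh Sh ->
  (forall i, uniform01_rv P (t i)) ->
  mutually_independent P t ->
  (1 <= #|mispredicted v vh theta|)%N ->
  (#|mispredicted v vh theta|%:R <= Num.sqrt (k%:R : R) * ln (k%:R : R)) ->
  ((1 - 3 * ln (k%:R : R) / Num.sqrt (k%:R : R))%:E <=
    P [set w | (Num.sqrt (k%:R : R) * ln (k%:R : R) <=
               k%:R - #|hired_before t Sh (mispredicted v vh theta) w|%:R - 1)%R])%E.
Proof.
move=> k_gt0 _ _ _ [Sh_le_k _] unif indep M_ge1 M_le.
set M := mispredicted v vh theta in M_ge1 M_le *.
set s := Num.sqrt (k%:R : R) in M_le *; set l := ln (k%:R : R) in M_le *.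
have [i0 i0M] : exists i0, i0 \in M by apply/set0Pn; rewrite -card_gt0.
have s_gt0 : 0 < s by rewrite sqrtr_gt0 ltr0n.
have [s_le|s_gt] := lerP s (3 * l).
  apply: le_trans (measure_ge0 _ _); rewrite lee_fin subr_le0.
  by rewrite ler_pdivlMr // mul1r.
have k_ge2 : (2 <= k)%N.
  have M1 : (1 : R) <= #|M|%:R by rewrite ler1n.
  have l_gt0 : 0 < l by nra.
  rewrite ltn_neqAle k_gt0 andbT; apply/eqP => k1.
  by move: l_gt0; rewrite /l -k1 ln1 ltxx.
apply: (hired_before_sqrt_ln_bound unif indep Sh_le_k i0M _ _ s_gt).
- by rewrite sqr_sqrtr.
- exact: ln_ge4_of_3ln_lt_sqrt.
Qed.
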